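(* Let $T$ be a decomposition tree of a distance-hereditary graph $G$, and let $v$ be an internal node of $T$ labeled $\oplus$ with left child $v_l$ and right child $v_r$, such that property (P) holds at $v_l$ and at $v_r$. Assume $\hat\alpha(v_r)>\hat\beta(v_l)$. Then $\hat{min}(v)=\hat{min}(v_l)+\hat{min}(v_r)+\hat\alpha(v_r)-\hat\beta(v_l)$.
   Context: All graphs are finite, simple, undirected. For a graph $H$ and $S\subseteq V(H)$, $N_H[S]$ is $S$ together with all vertices adjacent to a vertex of $S$, and $H[S]$ is the induced subgraph. Graphs carry a ''twin set'': a single-vertex graph on $x$ has twin set $\{x\}$. For vertex-disjoint graphs $G_l,G_r$ with twin sets $TS(G_l),TS(G_r)$: the true twin operation $G_l\otimes G_r$ has vertex set $V(G_l)\cup V(G_r)$, edge set $E(G_l)\cup E(G_r)\cup\{uw: u\in TS(G_l), w\in TS(G_r)\}$ and twin set $TS(G_l)\cup TS(G_r)$; the false twin operation $G_l\odot G_r$ has vertex set $V(G_l)\cup V(G_r)$, edge set $E(G_l)\cup E(G_r)$, twin set $TS(G_l)\cup TS(G_r)$; the attachment operation $G_l\oplus G_r$ has the same vertex and edge sets as $G_l\otimes G_r$ and twin set $TS(G_l)$. A decomposition tree $T$ of $G$ is a rooted binary tree whose leaves are in bijection with $V(G)$, each internal node having a left and a right child and a label in $\{\otimes,\odot,\oplus\}$; for each node $v$ define $\hat G(v)$ and $\hat{TS}(v)$ recursively: for a leaf $x$, the single-vertex graph on $x$ with twin set $\{x\}$; for an internal node $v$ with label $\circ$ and children $v_l,v_r$,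 $\hat G(v)=\hat G(v_l)\circ\hat G(v_r)$ with the corresponding twin set; one requires $\hat G(\text{root})=G$. Then $\hat G(v)$ is the subgraph of $G$ induced by the set $\hat V(v)$ of leaves below $v$. For a node $u$ and $0\le k\le|\hat{TS}(u)|$, call $S\subseteq\hat V(u)$ $k$-feasible if $\hat V(u)\setminus\hat{TS}(u)\subseteq N_{\hat G(u)}[S]$ and there is $X\subseteq S\cap\hat{TS}(u)$ with $|X|=k$ such that $\hat G(u)[S\setminus X]$ has a perfect matching. $\hat\gamma_k(u)$ is the minimum size of a $k$-feasible set. $\hat{min}(u)=\min\{\hat\gamma_k(u):0\le k\le|\hat{TS}(u)|\}$, and $\hat\alpha(u)$, $\hat\beta(u)$ are the smallest and the largest $k$ with $\hat\gamma_k(u)=\hat{min}(u)$. Property (P) holds at $u$ if for every $0\le k\le|\hat{TS}(u)|$: $\hat\gamma_k(u)=\hat{min}(u)+\hat\alpha(u)-k$ when $k\le\hat\alpha(u)$; $\hat\gamma_k(u)=\hat{min}(u)+k-\hat\beta(u)$ when $k\ge\hat\beta(u)$; $\hat\gamma_k(u)=\hat{min}(u)$ when $\hat\alpha(u)<k<\hat\beta(u)$ and $k-\hat\alpha(u)$ is even; and $\hat\gamma_k(u)=\hat{min}(u)+1$ otherwise. *)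

From mathcomp Require Import all_boot.
Set Implicit Arguments. Unset Strict Implicit. Unset Printing Implicit Defensive.

(* Node labels: true twin (⊗), false twin (⊙), attachment (⊕). *)
Inductive label := TrueTwin | FalseTwin | Attach.

Section DTree.
Variable V : finType.

Inductive dtree := Leaf of V | Node of label & dtree & dtree.

Fixpoint leaves (t : dtree) : seq V :=
  match t with Leaf x => [:: x] | Node _ l r => leaves l ++ leaves r end.

Definition vset (t : dtree) : {set V} := [set x | x \in leaves t].

Fixpoint ts (t : dtree) : {set V} :=
  match t with
  | Leaf x => [set x]
  | Node TrueTwin l r => ts l :|: ts r
  | Node FalseTwin l r => ts l :|: ts r
  | Node Attach l r => ts l
  end.

Fixpoint edge (t : dtree) : rel V :=
  match t with
  | Leaf _ => fun _ _ => false
  | Node op l r => fun x y =>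
      [|| edge l x y, edge r x y |
          (if op is FalseTwin then false else true) &&
          (((x \in ts l) && (y \in ts r)) || ((y \in ts l) && (x \in ts r)))]
  end.

Definition decomp_tree (G : rel V) (T : dtree) : Prop :=
  uniq (leaves T) /\ (forall x : V, x \in leaves T) /\ (forall x y, G x y = edge T x y).

Fixpoint is_node (v T : dtree) : Prop :=
  v = T \/ match T with Leaf _ => False | Node _ l r => is_node v l \/ is_node v r end.

Definition cnbhd (u : dtree) (S : {set V}) : {set V} :=
  [set x in vset u | (x \in S) || [exists y in S, edge u y x]].

Definition has_perfect_matching (u : dtree) (W : {set V}) : bool :=
  [exists M : {set {set V}},
    [forall e in M, exists x, exists y,
        [&& x != y, e == [set x; y], x \in W, y \in W & edge u x y]]
    && [forall x in W, #|[set e in M | x \in e]| == 1]].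

Definition kfeasible (u : dtree) (k : nat) (S : {set V}) : bool :=
  [&& S \subset vset u,
      (vset u :\: ts u) \subset cnbhd u S &
      [exists X : {set V}, [&& X \subset S :&: ts u, #|X| == k &
                               has_perfect_matching u (S :\: X)]]].

(* \hat\gamma_k(u): minimum size of a k-feasible set.  (A k-feasible set always
   exists for k <= |TS(u)|, so the default value #|V|.+1 is never the result.) *)
Definition gamma (u : dtree) (k : nat) : nat :=
  \big[minn/#|V|.+1]_(S : {set V} | kfeasible u k S) #|S|.

Definition hmin (u : dtree) : nat := \big[minn/#|V|.+1]_(k < #|ts u|.+1) gamma u k.

Definition halpha (u : dtree) : nat :=
  \big[minn/#|ts u|]_(k < #|ts u|.+1 | gamma u k == hmin u) k.

Definition hbeta (u : dtree) : nat :=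
  \max_(k < #|ts u|.+1 | gamma u k == hmin u) k.

Definition propP (u : dtree) : Prop :=
  forall k, k <= #|ts u| ->
    [/\ k <= halpha u -> gamma u k = hmin u + halpha u - k,
        hbeta u <= k -> gamma u k = hmin u + k - hbeta u,
        halpha u < k < hbeta u -> ~~ odd (k - halpha u) -> gamma u k = hmin u &
        halpha u < k < hbeta u -> odd (k - halpha u) -> gamma u k = (hmin u).+1].

End DTree.

(* At an attachment node v = v_l (+) v_r the only edges between the two sides join
   TS(v_l) to TS(v_r), and TS(v) = TS(v_l).  Restricting a k-feasible set S of v to the two
   sides therefore gives an m-feasible set of v_l and a c-feasible set of v_r with c <= m:
   the c twin vertices of v_r that S matches across are matched to distinct twin vertices of
   v_l, which become unmatched on the left.  So hmin(v) >= gamma_m(v_l) + gamma_c(v_r) for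
   some c <= m.  Conversely, for c >= 1, a c-feasible set of v_l and a c-feasible set of v_r
   combine into a 0-feasible set of v by matching their unmatched twin vertices across; any
   one of those in v_l dominates TS(v_r).  Property (P) gives
   gamma_m(v_l) >= hmin(v_l) + m - beta(v_l) and gamma_c(v_r) >= hmin(v_r) + alpha(v_r) - c,
   with equality when beta(v_l) <= m and c <= alpha(v_r); as beta(v_l) < alpha(v_r), both
   bounds meet at m = c = max(1, beta(v_l)). *)

From mathcomp Require Import all_boot order zify.
Set Implicit Arguments. Unset Strict Implicit. Unset Printing Implicit Defensive.
Import Order.TTheory.

Lemma cardsU_disjoint (T : finType) (A B : {set T}) :
  [disjoint A & B] -> #|A :|: B| = #|A| + #|B|.
Proof. by move=> dAB; rewrite cardsU disjoint_setI0 // cards0 subn0. Qed.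

Lemma subset_of_card (T : finType) (A : {set T}) n :
  n <= #|A| -> exists2 B : {set T}, B \subset A & #|B| = n.
Proof.
case/card_geqP=> s [uniq_s size_s sA]; exists [set x in s].
  by apply/subsetP=> x; rewrite inE => /sA.
by rewrite cardsE (card_uniqP uniq_s).
Qed.

Section Tree.
Variable V : finType.
Implicit Types (u l r : dtree V) (S W X Sl Sr Xl Xr : {set V}) (p : V -> V).

Lemma vset_leaf (x : V) : vset (Leaf x) = [set x].
Proof. by apply/setP=> y; rewrite !inE. Qed.

Lemma vset_node op l r : vset (Node op l r) = vset l :|: vset r.
Proof. by apply/setP=> x; rewrite !inE mem_cat. Qed.

(* Rewriting with [inE] instead would also unfold [vset u] into [leaves u]. *)
Lemma in_cnbhd u S x :
  (x \in cnbhd u S) = (x \in vset u) && ((x \in S) || [exists y in S, edge u y x]).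
Proof. by rewrite /cnbhd in_set. Qed.

Lemma mem_ts_vset u x : x \in ts u -> x \in vset u.
Proof.
elim: u => [y|[] l IHl r IHr] /=; rewrite ?vset_leaf // vset_node.
- by rewrite !in_setU => /orP[/IHl|/IHr]->; rewrite ?orbT.
- by rewrite !in_setU => /orP[/IHl|/IHr]->; rewrite ?orbT.
- by rewrite in_setU => /IHl->.
Qed.

Lemma ts_sub_vset u : ts u \subset vset u.
Proof. by apply/subsetP=> x; apply: mem_ts_vset. Qed.

Lemma edge_sym u : symmetric (edge u).
Proof. by elim: u => //= op l IHl r IHr x y; rewrite IHl IHr (orbC (_ && _)). Qed.

Lemma edge_vsetl u x y : edge u x y -> x \in vset u.
Proof.
elim: u => //= op l IHl r IHr; rewrite vset_node in_setU.
case/or3P=> [/IHl->//|/IHr->|/andP[_ /orP[/andP[/mem_ts_vset->//]|/andP[_ /mem_ts_vset->]]]];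
  by rewrite orbT.
Qed.

Lemma card_ts_gt0 u : 0 < #|ts u|.
Proof.
elim: u => [x|[] l IHl r IHr] /=; rewrite ?cards1 //;
  exact: leq_trans IHl (subset_leq_card (subsetUl _ _)).
Qed.

Lemma ts_twin op l r : op <> Attach -> ts (Node op l r) = ts l :|: ts r.
Proof. by case: op. Qed.

Lemma uniq_children op l r : uniq (leaves (Node op l r)) -> uniq (leaves l) /\ uniq (leaves r).
Proof. by rewrite /= cat_uniq => /and3P[]. Qed.

Lemma uniq_subtree (v T : dtree V) : is_node v T -> uniq (leaves T) -> uniq (leaves v).
Proof.
elim: T => [x|op l IHl r IHr] /=; first by case=> [->|[]].
by case=> [->//|[/IHl|/IHr]] IH /uniq_children[]; auto.
Qed.

Lemma subset_cnbhd u u' S S' :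
  vset u \subset vset u' -> subrel (edge u) (edge u') -> S \subset S' ->
  cnbhd u S \subset cnbhd u' S'.
Proof.
move=> sV sE sS; apply/subsetP=> x; rewrite !in_cnbhd => /andP[/(subsetP sV)-> /orP[xS|]].
  by rewrite (subsetP sS _ xS).
case/existsP=> y /andP[yS e]; apply/orP; right; apply/existsP; exists y.
by rewrite (subsetP sS _ yS) sE.
Qed.

Lemma cnbhd_nodeWl op l r Sl Sr z :
  z \in cnbhd l Sl -> z \in cnbhd (Node op l r) (Sl :|: Sr).
Proof.
by apply/subsetP/subset_cnbhd; rewrite ?vset_node ?subsetUl // => x y /= ->.
Qed.

Lemma cnbhd_nodeWr op l r Sl Sr z :
  z \in cnbhd r Sr -> z \in cnbhd (Node op l r) (Sl :|: Sr).
Proof.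
by apply/subsetP/subset_cnbhd; rewrite ?vset_node ?subsetUr // => x y /= ->; rewrite orbT.
Qed.

Definition pairs u W p :=
  forall x, x \in W -> [/\ p x \in W, p x != x, p (p x) = x & edge u x (p x)].

Definition pairable u W := exists p, pairs u W p.

Lemma pairable_matching u W : pairable u W -> has_perfect_matching u W.
Proof.
case=> p pW; apply/existsP; exists [set [set x; p x] | x in W]; apply/andP; split.
  apply/forallP=> e; apply/implyP=> /imsetP[x xW ->]; have [pxW px_x _ e_xpx] := pW x xW.
  by apply/existsP; exists x; apply/existsP; exists (p x); rewrite eq_sym px_x eqxx xW pxW.
apply/forallP=> z; apply/implyP=> zW; apply/cards1P; exists [set z; p z].
apply/setP=> e; rewrite in_set1 in_set; apply/andP/eqP=> [[/imsetP[x xW ->]]|->].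
  have [_ _ ppx _] := pW x xW.
  by rewrite in_set2 => /orP[]/eqP->; rewrite ?ppx // setUC.
by split; [apply/imsetP; exists z | rewrite set21].
Qed.

Lemma matching_pairable u W : has_perfect_matching u W -> pairable u W.
Proof.
case/existsP=> M /andP[/forallP edgeM /forallP coverW].
have pair_edge x y : x != y -> [set x; y] \in M -> (y \in W) && edge u x y.
  move=> xy /(implyP (edgeM _))/existsP[a /existsP[b /and5P[ab /eqP Exy aW bW eab]]].
  have: (x \in [set a; b]) && (y \in [set a; b]) by rewrite -Exy set21 set22.
  rewrite !in_set2 => /andP[/orP[]/eqP xE /orP[]/eqP yE]; subst x y;
    rewrite ?eqxx // in xy; by rewrite ?aW ?bW ?eab // edge_sym eab.
have edge_of x e1 e2 :
    x \in W -> e1 \in M -> e2 \in M -> x \in e1 -> x \in e2 -> e1 = e2.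
  move=> xW e1M e2M xe1 xe2; have /cards1P[e Ee] := implyP (coverW x) xW.
  have: e1 \in [set e in M | x \in e] by rewrite in_set e1M.
  have: e2 \in [set e in M | x \in e] by rewrite in_set e2M.
  by rewrite Ee !in_set1 => /eqP-> /eqP->.
have partner x : x \in W -> exists y, (y != x) && ([set x; y] \in M).
  move=> xW; have /cards1P[e Ee] := implyP (coverW x) xW.
  have: e \in [set e in M | x \in e] by rewrite Ee set11.
  rewrite in_set => /andP[eM]; have := implyP (edgeM e) eM.
  case/existsP=> a /existsP[b /and5P[ab /eqP Eab _ _ _]].
  rewrite Eab in_set2 => /orP[]/eqP xE.
    by exists b; rewrite xE eq_sym ab -Eab.
  by exists a; rewrite xE ab setUC -Eab.
pose p x := odflt x [pick y | (y != x) && ([set x; y] \in M)].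
have pP x : x \in W -> (p x != x) && ([set x; p x] \in M).
  by case/partner=> y xy; rewrite /p; case: pickP => [//|/(_ y)]; rewrite xy.
exists p => x xW; have /andP[px_x xM] := pP x xW.
have /andP[pxW e_xpx] : (p x \in W) && edge u x (p x) by rewrite pair_edge // eq_sym.
split=> //; have /andP[ppx_px pxM] := pP _ pxW.
have E : [set p x; p (p x)] = [set p x; x].
  by apply: (edge_of _ _ _ pxW pxM); rewrite ?set21 // setUC.
have: p (p x) \in [set p x; x] by rewrite -E set22.
by rewrite in_set2 (negbTE ppx_px) => /eqP.
Qed.

Lemma pairable0 u : pairable u set0.
Proof. by exists id => x; rewrite in_set0. Qed.

Lemma pairable2 u a b : a != b -> edge u a b -> pairable u [set a; b].
Proof.
move=> ab eab; exists (fun z => if z == a then b else a) => z.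
have ba : (b == a) = false by rewrite eq_sym (negbTE ab).
by rewrite in_set2 => /orP[]/eqP->; rewrite ?eqxx ?ba ?set21 ?set22 ?eqxx // edge_sym.
Qed.

Lemma pairableU u W1 W2 :
  [disjoint W1 & W2] -> pairable u W1 -> pairable u W2 -> pairable u (W1 :|: W2).
Proof.
move=> dW [p1 pW1] [p2 pW2]; exists (fun z => if z \in W1 then p1 z else p2 z) => z.
rewrite in_setU; case: ifPn => [zW1 _ | zW1 /= zW2].
  by have [pzW ? pp ?] := pW1 z zW1; rewrite pzW pp in_setU pzW.
have [pzW ? pp ?] := pW2 z zW2.
by rewrite (disjointFl dW pzW) pp in_setU pzW orbT.
Qed.

Lemma sub_pairable u u' W : subrel (edge u) (edge u') -> pairable u W -> pairable u' W.
Proof. by move=> sE [p pW]; exists p => x /pW[? ? ? /sE]. Qed.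

Lemma pairable_complete u (A B X Y : {set V}) :
  (forall a b, a \in A -> b \in B -> edge u a b) -> [disjoint A & B] ->
  X \subset A -> Y \subset B -> #|X| = #|Y| -> pairable u (X :|: Y).
Proof.
move=> eAB dAB; have [n] := ubnP #|X|; elim: n X Y => // n IHn X Y.
rewrite ltnS => leXn sXA sYB cXY.
have [X0|[x xX]] := set_0Vmem X.
  move: cXY; rewrite X0 cards0 => /esym/cards0_eq->; rewrite setU0; exact: pairable0.
have [y yY] : exists y, y \in Y.
  by apply/set0Pn; rewrite -card_gt0 -cXY card_gt0; apply/set0Pn; exists x.
have xA := subsetP sXA x xX; have yB := subsetP sYB y yY.
rewrite -(setD1K xX) -(setD1K yY) setUACA; apply: pairableU.
- have xY : x \in Y = false := contraFF (subsetP sYB x) (disjointFr dAB xA).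
  have yX : y \in X = false := contraFF (subsetP sXA y) (disjointFl dAB yB).
  rewrite disjoints_subset; apply/subsetP=> z; rewrite in_setC !in_setU !in_set1 !in_setD1.
  by case/orP=> /eqP->; rewrite eqxx ?xY ?yX !andbF.
- by apply: pairable2; [apply: contraTneq yB => <-; rewrite (disjointFr dAB xA) | exact: eAB].
- apply: IHn.
  + by apply: leq_trans leXn; rewrite (cardsD1 x X) xX.
  + exact: subset_trans (subD1set X x) sXA.
  + exact: subset_trans (subD1set Y y) sYB.
  + by move: cXY; rewrite (cardsD1 x) (cardsD1 y Y) xX yY => -[].
Qed.

Lemma kfeasibleP u k S :
  kfeasible u k S <->
  [/\ S \subset vset u, vset u :\: ts u \subset cnbhd u S &
      exists2 X : {set V}, X \subset S :&: ts u & #|X| = k /\ pairable u (S :\: X)].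
Proof.
split=> [/and3P[sS domS /existsP[X /and3P[sX /eqP cX /matching_pairable pX]]]|].
  by split=> //; exists X.
case=> sS domS [X sX [cX pX]]; apply/and3P; split=> //; apply/existsP; exists X.
by rewrite sX cX eqxx pairable_matching.
Qed.

Lemma kfeasible_leq_ts u k S : kfeasible u k S -> k <= #|ts u|.
Proof.
by case/kfeasibleP=> _ _ [X sX [<- _]]; apply/subset_leq_card/(subset_trans sX)/subsetIr.
Qed.

Lemma gamma_le u k S : kfeasible u k S -> gamma u k <= #|S|.
Proof. exact: (@bigmin_le_cond _ nat). Qed.

Lemma hmin_le u k : k <= #|ts u| -> hmin u <= gamma u k.
Proof. by move=> k_le; apply: (@bigmin_le _ nat _ _ (Ordinal (k_le : k < #|ts u|.+1))). Qed.

Lemma hmin_gamma u : exists2 k, k <= #|ts u| & hmin u = gamma u k.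
Proof.
have gamma_bound (k : 'I_#|ts u|.+1) : xpredT k -> gamma u k <= #|V|.+1.
  by move=> _; apply: (@bigmin_le_id _ nat).
rewrite /hmin; have [k _ ->] := @eq_bigmin _ nat _ _ ord0 xpredT _ isT gamma_bound.
by exists k; rewrite // -ltnS ltn_ord.
Qed.

Lemma halpha_le u : halpha u <= #|ts u|.
Proof. exact: (@bigmin_le_id _ nat). Qed.

Lemma hbeta_le u : hbeta u <= #|ts u|.
Proof. by apply/bigmax_leqP=> k _; rewrite -ltnS. Qed.

Definition matched W p (A B : {set V}) := [set x in W | (x \in A) && (p x \in B)].

Lemma in_matched W p A B x :
  (x \in matched W p A B) = [&& x \in W, x \in A & p x \in B].
Proof. by rewrite in_set. Qed.

Lemma pairs_matched u u' W p (A : {set V}) :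
  (forall x y, x \in A -> y \in A -> edge u x y -> edge u' x y) ->
  pairs u W p -> pairs u' (matched W p A A) p.
Proof.
move=> sE pW x; rewrite in_matched => /and3P[xW xA pxA]; have [pxW px_x ppx e] := pW x xW.
by split=> //; [rewrite in_matched pxW ppx pxA | exact: sE].
Qed.

Lemma card_matched u W p (A B : {set V}) :
  pairs u W p -> #|matched W p B A| <= #|matched W p A B|.
Proof.
move=> pW; rewrite -(@card_in_imset _ _ p); last first.
  move=> x y; rewrite !in_matched => /andP[xW _] /andP[yW _] pxy.
  by have [_ _ <- _] := pW x xW; have [_ _ <- _] := pW y yW; rewrite pxy.
apply/subset_leq_card/subsetP=> y /imsetP[x]; rewrite in_matched => /and3P[xW xB pxA] ->.
by have [pxW _ ppx _] := pW x xW; rewrite in_matched pxW pxA ppx.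
Qed.

Section Node.
Variables (op : label) (l r : dtree V).
Local Notation n := (Node op l r).
Hypothesis uniq_n : uniq (leaves n).

Lemma vset_disjoint : [disjoint vset l & vset r].
Proof.
move: uniq_n; rewrite /= cat_uniq => /and3P[_ /hasPn lr _].
by rewrite disjoints_subset; apply/subsetP=> x; rewrite in_setC !inE; apply: contraL (lr x).
Qed.

Lemma in_vset_lr x : x \in vset n -> (x \in vset l) = (x \notin vset r).
Proof.
rewrite vset_node in_setU; case: (boolP (x \in vset l)) => [xl|_ /= ->//].
by rewrite (disjointFr vset_disjoint xl).
Qed.

Lemma edge_node_l x y : x \in vset l -> y \in vset l -> edge n x y = edge l x y.
Proof.
move=> xl yl /=; have not_r z : z \in vset l -> z \in ts r = false.
  by move=> zl; apply: contraFF (@mem_ts_vset r z) (disjointFr vset_disjoint zl).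
have -> : edge r x y = false.
  by apply: contraFF (@edge_vsetl r x y) (disjointFr vset_disjoint xl).
by rewrite !not_r // !(andbF, orbF).
Qed.

Lemma edge_node_r x y : x \in vset r -> y \in vset r -> edge n x y = edge r x y.
Proof.
move=> xr yr /=; have not_l z : z \in vset r -> z \in ts l = false.
  by move=> zr; apply: contraFF (@mem_ts_vset l z) (disjointFl vset_disjoint zr).
have -> : edge l x y = false.
  by apply: contraFF (@edge_vsetl l x y) (disjointFl vset_disjoint xr).
by rewrite !not_l /= ?(andbF, orbF).
Qed.

Lemma edge_node_cross x y :
  x \in vset l -> y \in vset r -> edge n x y -> (x \in ts l) && (y \in ts r).
Proof.
move=> xl yr /= /or3P[|/edge_vsetl xr|/andP[_ /orP[//|/andP[/mem_ts_vset yl _]]]].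
- by rewrite edge_sym => /edge_vsetl yl; rewrite (disjointFr vset_disjoint yl) in yr.
- by rewrite (disjointFr vset_disjoint xl) in xr.
- by rewrite (disjointFr vset_disjoint yl) in yr.
Qed.
Lemma cnbhd_node_l S z :
  z \in vset l -> z \notin ts l -> z \in cnbhd n S -> z \in cnbhd l (S :&: vset l).
Proof.
move=> zl ztl; rewrite !in_cnbhd zl => /andP[_ /orP[zS|/existsP[y /andP[yS e]]]].
  by rewrite in_setI zS zl.
apply/orP; right; apply/existsP; exists y.
have yl : y \in vset l.
  apply: contraR ztl; rewrite in_vset_lr ?(edge_vsetl e) // negbK => yr.
  by rewrite edge_sym in e; case/andP: (edge_node_cross zl yr e).
by rewrite in_setI yS yl -(edge_node_l yl zl).
Qed.

Lemma cnbhd_node_r S z :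
  z \in vset r -> z \notin ts r -> z \in cnbhd n S -> z \in cnbhd r (S :&: vset r).
Proof.
move=> zr ztr; rewrite !in_cnbhd zr => /andP[_ /orP[zS|/existsP[y /andP[yS e]]]].
  by rewrite in_setI zS zr.
apply/orP; right; apply/existsP; exists y.
have yr : y \in vset r.
  apply: contraR ztr => yr'.
  have yl : y \in vset l by rewrite in_vset_lr ?(edge_vsetl e).
  by case/andP: (edge_node_cross yl zr e).
by rewrite in_setI yS yr -(edge_node_r yr zr).
Qed.

Lemma pairable_node_diff Sl Sr Xl Xr :
  Sl \subset vset l -> Sr \subset vset r -> Xl \subset vset l -> Xr \subset vset r ->
  pairable l (Sl :\: Xl) -> pairable r (Sr :\: Xr) ->
  pairable n ((Sl :|: Sr) :\: (Xl :|: Xr)).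
Proof.
move=> sSl sSr sXl sXr pl pr.
have dSlXr : [disjoint Sl & Xr] := disjointW sSl sXr vset_disjoint.
have dSrXl : [disjoint Sr & Xl].
  by rewrite disjoint_sym; exact: disjointW sXl sSr vset_disjoint.
rewrite setDUl !setDUr (setDidPl dSlXr) (setDidPl dSrXl).
rewrite (setIidPl (subsetDl _ _)) (setIidPr (subsetDl _ _)); apply: pairableU.
- apply: disjointW vset_disjoint.
    exact: subset_trans (subsetDl _ _) sSl.
  exact: subset_trans (subsetDl _ _) sSr.
- by apply: sub_pairable pl => x y /= ->.
- by apply: sub_pairable pr => x y /= ->; rewrite orbT.
Qed.

Lemma matched_lr_ts W p : pairs n W p -> matched W p (vset l) (vset r) \subset ts l.
Proof.
move=> pW; apply/subsetP=> x; rewrite in_matched => /and3P[xW xl pxr].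
by have [_ _ _ /(edge_node_cross xl pxr)/andP[]] := pW x xW.
Qed.

Lemma matched_rl_ts W p : pairs n W p -> matched W p (vset r) (vset l) \subset ts r.
Proof.
move=> pW; apply/subsetP=> x; rewrite in_matched => /and3P[xW xr pxl].
have [_ _ _ e] := pW x xW; rewrite edge_sym in e.
by case/andP: (edge_node_cross pxl xr e).
Qed.

Lemma kfeasible_twin kl kr Sl Sr : op <> Attach ->
  kfeasible l kl Sl -> kfeasible r kr Sr -> kfeasible n (kl + kr) (Sl :|: Sr).
Proof.
move=> twin /kfeasibleP[sSl doml [Xl sXl [<- pl]]] /kfeasibleP[sSr domr [Xr sXr [<- pr]]].
have [sXlS sXlts] : Xl \subset Sl /\ Xl \subset ts l by apply/andP; rewrite -subsetI.
have [sXrS sXrts] : Xr \subset Sr /\ Xr \subset ts r by apply/andP; rewrite -subsetI.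
have sXlV := subset_trans sXlS sSl; have sXrV := subset_trans sXrS sSr.
apply/kfeasibleP; rewrite ts_twin // vset_node; split.
- exact: setUSS.
- apply/subsetP=> z; rewrite in_setD !in_setU negb_or => /andP[/andP[ztl ztr] /orP[zl|zr]].
    by apply/cnbhd_nodeWl/(subsetP doml); rewrite in_setD ztl.
  by apply/cnbhd_nodeWr/(subsetP domr); rewrite in_setD ztr.
- exists (Xl :|: Xr); first by rewrite subsetI (setUSS sXlS sXrS) (setUSS sXlts sXrts).
  split; first by rewrite cardsU_disjoint // (disjointW sXlV sXrV vset_disjoint).
  exact: pairable_node_diff.
Qed.

End Node.

Section Attach.
Variables l r : dtree V.
Local Notation n := (Node Attach l r).
Hypothesis uniq_n : uniq (leaves n).

Lemma edge_attach_ts x y : x \in ts l -> y \in ts r -> edge n x y.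
Proof. by move=> xl yr /=; rewrite xl yr !orbT. Qed.

Lemma kfeasible_attach kl kr Sl Sr : 0 < kl -> kr <= kl ->
  kfeasible l kl Sl -> kfeasible r kr Sr -> kfeasible n (kl - kr) (Sl :|: Sr).
Proof.
move=> kl_gt0 kr_le /kfeasibleP[sSl doml [Xl sXl [cXl pl]]].
case/kfeasibleP=> sSr domr [Xr sXr [cXr pr]].
have [sXlS sXlts] : Xl \subset Sl /\ Xl \subset ts l by apply/andP; rewrite -subsetI.
have [sXrS sXrts] : Xr \subset Sr /\ Xr \subset ts r by apply/andP; rewrite -subsetI.
have sXlV := subset_trans sXlS sSl; have sXrV := subset_trans sXrS sSr.
have dX : [disjoint Xl & Xr] := disjointW sXlV sXrV (vset_disjoint uniq_n).
have [a aXl] : exists a, a \in Xl by apply/set0Pn; rewrite -card_gt0 cXl.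
have [Y sY cY] : exists2 Y : {set V}, Y \subset Xl & #|Y| = kr.
  by apply: subset_of_card; rewrite cXl.
apply/kfeasibleP; rewrite vset_node /=; split.
- exact: setUSS.
- apply/subsetP=> z; rewrite in_setD in_setU => /andP[ztl /orP[zl|zr]].
    by apply/cnbhd_nodeWl/(subsetP doml); rewrite in_setD ztl.
  have [ztr|ztr] := boolP (z \in ts r); last first.
    by apply/cnbhd_nodeWr/(subsetP domr); rewrite in_setD ztr.
  rewrite in_cnbhd vset_node in_setU zr orbT andTb; apply/orP; right; apply/existsP; exists a.
  by rewrite in_setU (subsetP sXlS _ aXl) edge_attach_ts ?(subsetP sXlts).
- exists (Xl :\: Y).
    exact: subset_trans (subsetDl _ _) (subset_trans sXl (setSI _ (subsetUl _ _))).
  split; first by rewrite cardsDS // cXl cY.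
  have -> : (Sl :|: Sr) :\: (Xl :\: Y) = ((Sl :|: Sr) :\: (Xl :|: Xr)) :|: (Y :|: Xr).
    apply/setP=> z; rewrite !(in_setD, in_setU).
    have [zXr|zXr] := boolP (z \in Xr).
      by rewrite (disjointFl dX zXr) (subsetP sXrS _ zXr) andbF !orbT.
    have [zY|zY] := boolP (z \in Y).
      by rewrite (subsetP sY _ zY) (subsetP sXlS _ (subsetP sY _ zY)).
    by rewrite /= !orbF.
  apply: pairableU.
  + apply: disjointWr (setSU _ sY) _.
    by rewrite disjoints_subset setDE subsetIr.
  + exact: pairable_node_diff.
  + apply: (pairable_complete (A := ts l) (B := ts r)) => //.
    * exact: edge_attach_ts.
    * exact: disjointW (ts_sub_vset l) (ts_sub_vset r) (vset_disjoint uniq_n).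
    * exact: subset_trans sY sXlts.
    * by rewrite cY cXr.
Qed.

Section Restriction.
Variables (S X : {set V}) (p : V -> V).
Local Notation W := (S :\: X).
Hypotheses (sS : S \subset vset n) (domS : vset n :\: ts l \subset cnbhd n S)
  (sX : X \subset S :&: ts l) (pW : pairs n W p).

Lemma vset_partner x : x \in W -> (p x \in vset l) = (p x \notin vset r).
Proof.
case/pW=> pxW _ _ _; apply: (in_vset_lr uniq_n).
exact: subsetP sS _ (subsetP (subsetDl S X) _ pxW).
Qed.

Lemma kfeasible_attach_l :
  kfeasible l (#|X| + #|matched W p (vset l) (vset r)|) (S :&: vset l).
Proof.
set C := matched W p (vset l) (vset r).
have Cts : C \subset ts l := matched_lr_ts uniq_n pW.
have CW : C \subset W by apply/subsetP=> x; rewrite in_matched => /andP[].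
have [sXS sXts] : X \subset S /\ X \subset ts l by apply/andP; rewrite -subsetI.
apply/kfeasibleP; split.
- exact: subsetIr.
- apply/subsetP=> z; rewrite in_setD => /andP[ztl zl]; apply: (cnbhd_node_l uniq_n) => //.
  by apply: (subsetP domS); rewrite in_setD ztl vset_node in_setU zl.
- exists (X :|: C).
    rewrite subUset !subsetI sXS sXts (subset_trans CW (subsetDl _ _)) Cts.
    by rewrite (subset_trans sXts (ts_sub_vset l)) (subset_trans Cts (ts_sub_vset l)).
  split.
    rewrite cardsU_disjoint //; apply: disjointWr CW _.
    by rewrite disjoint_sym disjoints_subset setDE subsetIr.
  exists p; rewrite (_ : _ :\: _ = matched W p (vset l) (vset l)).
    by apply: pairs_matched pW => x y xl yl; rewrite (edge_node_l uniq_n).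
  apply/setP=> z; rewrite /C in_setD in_setU in_setI !in_matched.
  have [zW|zW] := boolP (z \in W).
    move: (zW); rewrite in_setD => /andP[/negbTE-> ->].
    by rewrite (vset_partner zW); case: (z \in vset l); case: (p z \in vset r).
  by move: zW; rewrite in_setD negb_and negbK => /orP[->|/negbTE->]; rewrite ?andbF.
Qed.

Lemma kfeasible_attach_r : kfeasible r #|matched W p (vset r) (vset l)| (S :&: vset r).
Proof.
set C := matched W p (vset r) (vset l).
have Cts : C \subset ts r := matched_rl_ts uniq_n pW.
have Cr : C \subset vset r by apply/subsetP=> x; rewrite in_matched => /and3P[].
have CS : C \subset S.
  by apply/subsetP=> x; rewrite in_matched in_setD => /andP[/andP[]].
have notX z : z \in vset r -> z \in X = false.
  move=> zr; apply: contraFF (subsetP (subset_trans sX (subsetIr _ _)) z) _.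
  exact: contraFF (@mem_ts_vset l z) (disjointFl (vset_disjoint uniq_n) zr).
apply/kfeasibleP; split.
- exact: subsetIr.
- apply/subsetP=> z; rewrite in_setD => /andP[ztr zr]; apply: (cnbhd_node_r uniq_n) => //.
  apply: (subsetP domS); rewrite in_setD vset_node in_setU zr orbT andbT.
  by apply: contraTN zr => /mem_ts_vset zl; rewrite (disjointFr (vset_disjoint uniq_n) zl).
- exists C; first by rewrite !subsetI CS Cr Cts.
  split=> //; exists p; rewrite (_ : _ :\: _ = matched W p (vset r) (vset r)).
    by apply: pairs_matched pW => x y xr yr; rewrite (edge_node_r uniq_n).
  apply/setP=> z; rewrite /C in_setD in_setI !in_matched.
  have [zr|zr] := boolP (z \in vset r); last by rewrite /= !andbF.
  have [zS|zS] := boolP (z \in S); last by rewrite in_setD (negbTE zS) !andbF.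
  have zW : z \in W by rewrite in_setD notX.
  by rewrite zW (vset_partner zW); case: (p z \in vset r).
Qed.

End Restriction.

Lemma kfeasible_attach_split k S : kfeasible n k S ->
  exists m c, [/\ c <= m, kfeasible l m (S :&: vset l) & kfeasible r c (S :&: vset r)].
Proof.
case/kfeasibleP=> sS domS [X sX [_ [p pW]]].
exists (#|X| + #|matched (S :\: X) p (vset l) (vset r)|).
exists #|matched (S :\: X) p (vset r) (vset l)|; split.
- exact: leq_trans (card_matched _ _ pW) (leq_addl _ _).
- exact: kfeasible_attach_l.
- exact: kfeasible_attach_r.
Qed.

End Attach.

Lemma kfeasible_leaf (x : V) : kfeasible (Leaf x) 0 set0 /\ kfeasible (Leaf x) 1 [set x].
Proof.
split; apply/kfeasibleP; rewrite vset_leaf /= setDv.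
  split; [exact: sub0set | exact: sub0set |].
  by exists set0; [exact: sub0set | rewrite cards0 setDv; split=> //; apply: pairable0].
split; [exact: subxx | exact: sub0set |].
by exists [set x]; [rewrite setIid | rewrite cards1 setDv; split=> //; apply: pairable0].
Qed.

Lemma kfeasible_exists u k : uniq (leaves u) -> k <= #|ts u| -> exists S, kfeasible u k S.
Proof.
elim: u k => [x|op l IHl r IHr] k uniq_u k_le.
  have [f0 f1] := kfeasible_leaf x.
  by move: k_le; rewrite /= cards1; case: k => [|[|//]] _; [exists set0 | exists [set x]].
have [uniq_l uniq_r] := uniq_children uniq_u.
have [attach|twin] : op = Attach \/ op <> Attach by case: (op); [right|right|left].
  subst op; case: k k_le => [|k] k_le.
    have [Sl fl] := IHl 1 uniq_l (card_ts_gt0 l); have [Sr fr] := IHr 1 uniq_r (card_ts_gt0 r).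
    by exists (Sl :|: Sr); rewrite -(subnn 1); apply: kfeasible_attach.
  have [Sl fl] := IHl k.+1 uniq_l k_le; have [Sr fr] := IHr 0 uniq_r (leq0n _).
  by exists (Sl :|: Sr); rewrite -(subn0 k.+1); apply: kfeasible_attach.
have {}k_le : k <= #|ts l| + #|ts r|.
  by apply: leq_trans k_le _; rewrite ts_twin // cardsU leq_subr.
have [Sl fl] := IHl (minn k #|ts l|) uniq_l (geq_minr _ _).
have [Sr fr] := IHr (k - minn k #|ts l|) uniq_r ltac:(lia).
by exists (Sl :|: Sr); rewrite -(subnKC (geq_minl k #|ts l|)); apply: kfeasible_twin.
Qed.

Lemma gamma_witness u k : uniq (leaves u) -> k <= #|ts u| ->
  exists2 S, kfeasible u k S & #|S| = gamma u k.
Proof.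
move=> uniq_u k_le; have [S0 fS0] := kfeasible_exists uniq_u k_le.
have card_bound S : kfeasible u k S -> #|S| <= #|V|.+1 by move=> _; apply/leqW/max_card.
by rewrite /gamma; have [S fS ->] := @eq_bigmin _ nat _ _ S0 _ _ fS0 card_bound; exists S.
Qed.

Lemma hmin_attach_le l r c : uniq (leaves (Node Attach l r)) ->
  0 < c -> c <= #|ts l| -> c <= #|ts r| -> hmin (Node Attach l r) <= gamma l c + gamma r c.
Proof.
move=> uniq_n c_gt0 c_l c_r; have [uniq_l uniq_r] := uniq_children uniq_n.
have [Sl fl <-] := gamma_witness uniq_l c_l; have [Sr fr <-] := gamma_witness uniq_r c_r.
have f0 := kfeasible_attach uniq_n c_gt0 (leqnn c) fl fr; rewrite subnn in f0.
apply: leq_trans (hmin_le (leq0n _)) (leq_trans (gamma_le f0) _).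
by rewrite cardsU leq_subr.
Qed.

Lemma hmin_attach_ge l r : uniq (leaves (Node Attach l r)) ->
  exists m c, [/\ c <= m, m <= #|ts l|, c <= #|ts r| &
                  gamma l m + gamma r c <= hmin (Node Attach l r)].
Proof.
move=> uniq_n; have [k k_le ->] := hmin_gamma (Node Attach l r).
have [S fS <-] := gamma_witness uniq_n k_le.
have [m [c [cm fl fr]]] := kfeasible_attach_split uniq_n fS.
exists m, c; split=> //; [exact: kfeasible_leq_ts fl | exact: kfeasible_leq_ts fr |].
apply: leq_trans (leq_add (gamma_le fl) (gamma_le fr)) _.
rewrite -cardsU_disjoint -?setIUr ?subset_leq_card ?subsetIl //.
exact: disjointW (subsetIr _ _) (subsetIr _ _) (vset_disjoint uniq_n).
Qed.

Lemma propP_gamma_hbeta u k : propP u -> k <= #|ts u| -> hmin u + k - hbeta u <= gamma u k.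
Proof.
move=> Pu k_le; have [_ gamma_ge _ _] := Pu k k_le.
have [beta_le|k_lt] := leqP (hbeta u) k; first by rewrite gamma_ge.
by apply: leq_trans (hmin_le k_le); lia.
Qed.

Lemma propP_gamma_halpha u k : propP u -> k <= #|ts u| -> hmin u + halpha u - k <= gamma u k.
Proof.
move=> Pu k_le; have [gamma_le_alpha _ _ _] := Pu k k_le.
have [k_le_alpha|alpha_lt] := leqP k (halpha u); first by rewrite gamma_le_alpha.
by apply: leq_trans (hmin_le k_le); lia.
Qed.

End Tree.

Theorem lemma44 (V : finType) (G : rel V) (T : dtree V) (vl vr : dtree V) :
  decomp_tree G T ->
  is_node (Node Attach vl vr) T ->
  propP vl -> propP vr ->
  hbeta vl < halpha vr ->
  hmin (Node Attach vl vr) = hmin vl + hmin vr + halpha vr - hbeta vl.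
Proof.
move=> [uniq_T _] v_in_T Pl Pr beta_lt_alpha.
have uniq_v := uniq_subtree v_in_T uniq_T.
apply/eqP; rewrite eqn_leq; apply/andP; split.
  pose c := maxn 1 (hbeta vl).
  have beta_le_c : hbeta vl <= c by rewrite leq_maxr.
  have c_le_alpha : c <= halpha vr.
    by rewrite geq_max (leq_ltn_trans (leq0n _) beta_lt_alpha) ltnW.
  have c_l : c <= #|ts vl| by rewrite geq_max card_ts_gt0 hbeta_le.
  have c_r : c <= #|ts vr| := leq_trans c_le_alpha (halpha_le vr).
  have [_ gamma_l _ _] := Pl c c_l; have [gamma_r _ _ _] := Pr c c_r.
  apply: leq_trans (hmin_attach_le uniq_v (leq_maxl _ _) c_l c_r) _.
  by rewrite (gamma_l beta_le_c) (gamma_r c_le_alpha); lia.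
have [m [c [cm m_le c_le le_hmin]]] := hmin_attach_ge uniq_v.
have := hmin_le m_le; have := hmin_le c_le.
have := propP_gamma_hbeta Pl m_le; have := propP_gamma_halpha Pr c_le.
lia.
Qed.
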